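(* Let $N\ge2$ and, for $0\le k\le N-1$, let $H_N(k)=\sum_{i=k+1}^{N-1}\frac1i$ (so $H_N(N-1)=0$). For $\theta>0$ define $$\kappa_N(\theta)=\begin{cases}0 & \text{if } 0<\theta\le H_N(0)^{-1},\\ k & \text{if } H_N(k-1)^{-1}<\theta\le H_N(k)^{-1}\text{ for some }1\le k\le N-2,\\ N-1&\text{if }\theta>N-1.\end{cases}$$ Then for every $\theta>0$: - $W(N,\kappa_N(\theta))\ge W(N,k)$ for all $0\le k\le N-1$; - in the weighted game of best choice with the Ewens distribution (probability of $\pi\in\mathfrak S_N$ proportional to $\theta^{\mathrm{lrm}(\pi)}$), the positional strategy that rejects the first $\kappa_N(\theta)$ candidates and then accepts the next left-to-right maximum maximizes the probability of winning among all strategies. Moreover, $\kappa_N$ is a nondecreasing function of $\theta$.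
   Context: Permutations of $\{1,\dots,N\}$ are written in one-line notation; $\mathfrak S_N$ is the set of all of them. An entry $\pi_j$ is a left-to-right maximum if $\pi_j>\pi_i$ for all $i<j$; $\mathrm{lrm}(\pi)$ is the number of left-to-right maxima. The weighted game of best choice: $\pi\in\mathfrak S_N$ is drawn with probability proportional to $\theta^{\mathrm{lrm}(\pi)}$. At step $i$ the player sees only the relative order of $\pi_1,\dots,\pi_i$ and decides to accept candidate $i$ (ending the game) or reject it irrevocably; candidate $N$ is accepted if all others were rejected. The player wins iff the accepted candidate $i$ has $\pi_i=N$. For $0\le k\le N-1$, $\pi$ is $k$-winnable if the first index $j>k$ with $\pi_j$ a left-to-right maximum has $\pi_j=N$. $W(N,k)=\sum_{k\text{-winnable }\pi}\theta^{\mathrm{lrm}(\pi)}$, so $W(N,k)/\sum_{\pi\in\mathfrak S_N}\theta^{\mathrm{lrm}(\pi)}$ is the winning probability of the positional strategy that rejects the first $k$ candidates and accepts the next left-to-right maximum. *)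

From HB Require Import structures.
From mathcomp Require Import all_boot all_order all_algebra all_fingroup.
Set Implicit Arguments. Unset Strict Implicit. Unset Printing Implicit Defensive.
Import Order.TTheory GRing.Theory Num.Theory.

(* Conventions: a permutation of {1,...,N} is represented by p : 'S_N, i.e. a
   permutation of {0,...,N-1}; position j (1-based) is index j-1 : 'I_N and
   value v (1-based) is v-1.  So "pi_j = N" becomes "val (p j) = N.-1". *)

Section Defs.
Variable N : nat.

Definition lrm_at (p : 'S_N) (j : 'I_N) : bool :=
  [forall i : 'I_N, (i < j)%N ==> (p i < p j)%N].

Definition lrm (p : 'S_N) : nat := #|[pred j : 'I_N | lrm_at p j]|.

(* k-winnable: the first index j > k (1-based), i.e. 0-based index >= k, at
   which there is a left-to-right maximum carries the value N. *)
Definition kwinnable (p : 'S_N) (k : nat) : bool :=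
  [exists j : 'I_N, [&& (k <= j)%N, lrm_at p j, val (p j) == N.-1 &
     [forall i : 'I_N, ((k <= i) && (i < j))%N ==> ~~ lrm_at p i]]].

(* relative order of the prefix p_0,...,p_i : the list, for each position
   j <= i, of the (0-based) rank of p j among p_0,...,p_i. *)
Definition relpat (p : 'S_N) (i : nat) : seq nat :=
  [seq #|[pred l : 'I_N | (l <= i)%N && (p l < p j)%N]|
   | j : 'I_N <- [seq j <- enum 'I_N | (val j <= i)%N]].

(* A (deterministic) strategy: given the relative order of the candidates seen
   so far (the step number being the length of the pattern), accept or not. *)
Definition strategy := seq nat -> bool.

(* 0-based index of the accepted candidate: the first i < N-1 at which the
   strategy accepts, and N-1 (the last candidate) if all others are rejected. *)
Definition stop_time (s : strategy) (p : 'S_N) : nat :=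
  find (fun i => s (relpat p i)) (iota 0 N.-1).

Definition wins (s : strategy) (p : 'S_N) : bool :=
  [exists i : 'I_N, (val i == stop_time s p) && (val (p i) == N.-1)].

(* positional strategy: reject the first k candidates, then accept the next
   left-to-right maximum (the current candidate is a left-to-right maximum
   iff its relative rank among those seen is the top one). *)
Definition positional (k : nat) : strategy :=
  fun pat => (k < size pat)%N && (last 0%N pat == (size pat).-1).

Variable R : realFieldType.
Local Open Scope ring_scope.

Definition W (theta : R) (k : nat) : R :=
  \sum_(p : 'S_N | kwinnable p k) theta ^+ lrm p.

Definition Zpart (theta : R) : R := \sum_(p : 'S_N) theta ^+ lrm p.

Definition winprob (theta : R) (s : strategy) : R :=
  (\sum_(p : 'S_N | wins s p) theta ^+ lrm p) / Zpart theta.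

Definition H (k : nat) : R := \sum_(k.+1 <= i < N) (i%:R)^-1.

Definition kappa (theta : R) : nat :=
  if theta <= (H 0)^-1 then 0%N
  else if (N.-1)%:R < theta then N.-1
  else \max_(k < N | (1 <= k <= N - 2)%N &&
                     ((H k.-1)^-1 < theta) && (theta <= (H k)^-1)) k.

End Defs.

From HB Require Import structures.
From mathcomp Require Import all_boot all_order all_algebra all_fingroup.
From mathcomp Require Import zify ring.
Set Implicit Arguments. Unset Strict Implicit. Unset Printing Implicit Defensive.
Import Order.TTheory GRing.Theory Num.Theory.

(* A permutation of length m+1 is determined by the relative order q of its
   first m entries and the value v of its last entry ([extend]).  The last
   entry is a left-to-right maximum iff v is the largest value, so lrm grows
   by [v == ord_max], and a strategy sees the same patterns on the first m
   candidates of [extend (q, v)] as on q.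

   For a strategy s, [reward n s a b] weighs each permutation by theta^lrm and
   pays a if s stops on the maximum, 0 if it stops elsewhere, b if it never
   stops.  Summing out the last entry turns reward (m+1) s a b into a reward
   of length m in which the last decision pays at most
   theta * max a b + m * b, with equality for a positional strategy (which
   makes a definite choice instead of the max).  Iterating gives the bound
   [bellman] for every strategy and the exact value [positional_value] for
   positional ones, and the winning weight on 'S_(m+1) is reward m s m theta.

   The threshold kappa is characterised through the harmonic tails H:
   theta * H kappa <= 1 and theta * H (kappa-1) > 1 when kappa > 0.  With
   this, [bellman] and [positional_value] coincide at kappa, so the positional
   strategy with threshold kappa is optimal; since it wins exactly on the
   kappa-winnable permutations, kappa also maximises W, and the same
   characterisation shows that kappa is nondecreasing in theta. *)

Lemma lift_ltn n (h : 'I_n.+1) (x y : 'I_n) : (lift h x < lift h y) = (x < y).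
Proof. by rewrite /= /bump; case: leqP; case: leqP; lia. Qed.

Lemma card_lift_max m (P : pred 'I_m.+1) :
  #|[pred i | P i]| = #|[pred j : 'I_m | P (lift ord_max j)]| + P ord_max.
Proof.
rewrite -!sum1_card big_mkcond big_ord_recr /= [in RHS]big_mkcond.
congr (_ + _); apply: eq_bigr => i _.
by have -> : widen_ord (leqnSn m) i = lift ord_max i by apply/val_inj/esym/lift_max.
Qed.

Section Extension.
Variable m : nat.

Definition extend_fun (q : 'S_m) (v : 'I_m.+1) (i : 'I_m.+1) : 'I_m.+1 :=
  if unlift ord_max i is Some j then lift v (q j) else v.

Lemma extend_fun_inj q v : injective (extend_fun q v).
Proof.
move=> x y; rewrite /extend_fun.
case: unliftP => [j ->|->]; case: unliftP => [j' ->|->] //.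
- by move/lift_inj/perm_inj->.
- by move=> E; have := neq_lift v (q j); rewrite E eqxx.
- by move=> E; have := neq_lift v (q j'); rewrite -E eqxx.
Qed.

Definition extend (x : 'S_m * 'I_m.+1) : 'S_m.+1 := perm (@extend_fun_inj x.1 x.2).

Lemma extend_lift q v j : extend (q, v) (lift ord_max j) = lift v (q j).
Proof. by rewrite permE /extend_fun liftK. Qed.

Lemma extend_last q v : extend (q, v) ord_max = v.
Proof. by rewrite permE /extend_fun unlift_none. Qed.

Lemma extend_inj : injective extend.
Proof.
move=> [q v] [q' v'] E.
have Ev : v = v' by rewrite -(extend_last q v) -(extend_last q' v') E.
subst v'; congr (_, _); apply/permP => j.
by apply: (@lift_inj _ v); rewrite -!extend_lift E.
Qed.

Lemma extend_bij : bijective extend.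
Proof.
apply: (inj_card_bij extend_inj).
by rewrite card_prod !card_Sn card_ord factS mulnC.
Qed.

Lemma sum_extend (V : nmodType) (F : 'S_m.+1 -> V) :
  (\sum_(p : 'S_m.+1) F p = \sum_(q : 'S_m) \sum_(v : 'I_m.+1) F (extend (q, v)))%R.
Proof. by rewrite (reindex extend) ?pair_bigA //; apply: onW_bij; exact: extend_bij. Qed.

Lemma lrm_at_extend_lift q v j :
  lrm_at (extend (q, v)) (lift ord_max j) = lrm_at q j.
Proof.
apply/forallP/forallP => Hlt i.
  apply/implyP => lt; have := implyP (Hlt (lift ord_max i)).
  by rewrite !extend_lift !lift_ltn; apply.
apply/implyP; case: (unliftP ord_max i) => [i' ->|->].
  by rewrite !extend_lift !lift_ltn; apply/implyP.
by rewrite lift_max ltnNge /= ltnW.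
Qed.

Lemma lrm_at_extend_last q v : lrm_at (extend (q, v)) ord_max = (v == ord_max).
Proof.
apply/forallP/eqP => [Hlt|->].
  rewrite extend_last in Hlt.
  case: (unliftP ord_max (((extend (q, v))^-1)%g ord_max)) => [i Ei|Ei].
    have := implyP (Hlt (lift ord_max i)); rewrite -Ei permKV Ei lift_max ltn_ord.
    by move/(_ isT); rewrite ltnNge -ltnS ltn_ord.
  by have := permKV (extend (q, v)) ord_max; rewrite Ei extend_last.
move=> i; apply/implyP => lt; rewrite extend_last.
case: (unliftP ord_max i) => [i' Ei|Ei]; last by rewrite Ei ltnn in lt.
by rewrite Ei extend_lift /= /bump /=; have := ltn_ord (q i'); lia.
Qed.

Lemma lrm_extend q v : lrm (extend (q, v)) = lrm q + (v == ord_max).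
Proof.
rewrite /lrm card_lift_max lrm_at_extend_last; congr (_ + _).
by apply: eq_card => j; rewrite !inE lrm_at_extend_lift.
Qed.

End Extension.

Lemma val_prefix n i : (i < n)%N ->
  map val [seq j <- enum 'I_n | val j <= i] = iota 0 i.+1.
Proof.
move=> lt_in; rewrite -(filter_map val (fun x => x <= i)) val_enum_ord.
exact: filter_iota_leq.
Qed.

Lemma relpat_size n (p : 'S_n) i : i < n -> size (relpat p i) = i.+1.
Proof. by move=> lt_in; rewrite size_map -(size_map val) val_prefix // size_iota. Qed.

Lemma rank_lrm n (p : 'S_n) (y : 'I_n) :
  (#|[pred l : 'I_n | (l <= y) && (p l < p y)]| == y) = lrm_at p y.
Proof.
have sub : [pred l : 'I_n | (l <= y) && (p l < p y)] \subset [pred l : 'I_n | l < y].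
  apply/subsetP => l; rewrite !inE => /andP[]; rewrite leq_eqVlt.
  by case/orP=> [/eqP/val_inj ->|//]; rewrite ltnn.
have card_lt : #|[pred l : 'I_n | l < y]| = y.
  rewrite -sum1_card -(big_ord_widen_cond n predT (fun _ => 1) (ltnW (ltn_ord y))).
  by rewrite sum1_card card_ord.
have [_ eq_card_sub] := subset_leqif_card sub.
rewrite -[X in _ == X]card_lt eq_card_sub.
apply/subsetP/forallP => Hlt x.
  by apply/implyP => lt; have /(_ lt)/andP[] := Hlt x.
by rewrite !inE => lt; rewrite (ltnW lt) (implyP (Hlt x)).
Qed.

Lemma relpat_last n (p : 'S_n) (y : 'I_n) :
  (last 0 (relpat p y) == y) = lrm_at p y.
Proof.
have Ey := val_prefix (ltn_ord y).
have size_pre : size [seq j <- enum 'I_n | val j <= y] = y.+1.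
  by rewrite -(size_map val) Ey size_iota.
have nth_pre : nth y [seq j <- enum 'I_n | val j <= y] y = y.
  by apply: val_inj; rewrite -(nth_map y 0) ?size_pre // Ey nth_iota.
rewrite /relpat -nth_last size_map size_pre (nth_map y) ?size_pre //.
by rewrite nth_pre rank_lrm.
Qed.

Lemma positional_relpat n k (p : 'S_n) (y : 'I_n) :
  positional k (relpat p y) = (k <= y) && lrm_at p y.
Proof. by rewrite /positional relpat_size // ltnS relpat_last. Qed.

Lemma relpat_extend m (q : 'S_m) v i : i < m -> relpat (extend (q, v)) i = relpat q i.
Proof.
move=> lt_im; have ge_mi : (m <= i) = false by rewrite leqNgt lt_im.
rewrite /relpat enum_ordSr filter_rcons /= ge_mi filter_map -map_comp.
apply: eq_map => j /=.
have -> : widen_ord (leqnSn m) j = lift ord_max j by apply/val_inj/esym/lift_max.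
rewrite card_lift_max [X in _ + X]/= ge_mi addn0; apply: eq_card => l.
by rewrite !inE !extend_lift !lift_ltn lift_max.
Qed.

(* Index at which s first accepts when all n candidates of p may be
   accepted, or n if it never accepts. *)
Definition accept_time n (s : strategy) (p : 'S_n) : nat :=
  find (fun i => s (relpat p i)) (iota 0 n).

Definition max_at n (p : 'S_n) (t : nat) : bool :=
  [exists i : 'I_n, (i == t :> nat) && (p i == n.-1 :> nat)].

Lemma wins_max_at n s (p : 'S_n) : wins s p = max_at p (stop_time s p).
Proof. by []. Qed.

Lemma accept_time_le n s (p : 'S_n) : accept_time s p <= n.
Proof. by have := find_size (fun i => s (relpat p i)) (iota 0 n); rewrite size_iota. Qed.

Lemma lift_eq_max m (v : 'I_m.+1) (x : 'I_m) :
  (val (lift v x) == m) = (val x == m.-1) && (v != ord_max).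
Proof.
rewrite /= /bump -(inj_eq val_inj) /=; have := ltn_ord x; have := ltn_ord v.
by case: leqP => /=; lia.
Qed.

Section ExtendStopping.
Variables (m : nat) (s : strategy).

Lemma accept_time_extend (q : 'S_m) v : accept_time s (extend (q, v)) =
  if accept_time s q < m then accept_time s q
  else if s (relpat (extend (q, v)) m) then m else m.+1.
Proof.
have E : {in iota 0 m, (fun i => s (relpat (extend (q, v)) i)) =1 (fun i => s (relpat q i))}.
  by move=> i; rewrite mem_iota add0n => /andP[_ lt] /=; rewrite relpat_extend.
rewrite /accept_time.
have -> : iota 0 m.+1 = iota 0 m ++ [:: m] by rewrite -addn1 iotaD.
rewrite find_cat (eq_in_find E) (eq_in_has E).
rewrite has_find size_iota; case: ifP => // _ /=.
by case: (s _); rewrite ?addn0 ?addn1.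
Qed.

Lemma stop_time_extend (q : 'S_m) v : stop_time s (extend (q, v)) = accept_time s q.
Proof.
apply: eq_in_find => i; rewrite mem_iota add0n => /andP[_ lt] /=.
by rewrite relpat_extend.
Qed.

Lemma max_at_extend (q : 'S_m) v t : t < m ->
  max_at (extend (q, v)) t = max_at q t && (v != ord_max).
Proof.
move=> lt_tm; apply/existsP/andP.
  case=> i /andP[/eqP Ei Emax].
  case: (unliftP ord_max i) Ei Emax => [j ->|-> Em]; last by rewrite -Em ltnn in lt_tm.
  rewrite lift_max extend_lift lift_eq_max => Ej /andP[Emax Hv].
  by split=> //; apply/existsP; exists j; rewrite Ej eqxx.
case=> /existsP[j /andP[/eqP Ej Emax]] Hv; exists (lift ord_max j).
by rewrite lift_max Ej eqxx extend_lift lift_eq_max Emax.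
Qed.

Lemma max_at_extend_last (q : 'S_m) v : max_at (extend (q, v)) m = (v == ord_max).
Proof.
apply/existsP/eqP => [[i /andP[/eqP Ei /eqP Emax]]|->].
  have Ei_max : i = ord_max by apply: val_inj.
  by move: Emax; rewrite Ei_max extend_last => Ev; apply: val_inj.
by exists ord_max; rewrite extend_last /= !eqxx.
Qed.

Lemma positional_extend_last (q : 'S_m) v k :
  positional k (relpat (extend (q, v)) m) = (k <= m) && (v == ord_max).
Proof. by rewrite (positional_relpat k (extend (q, v)) ord_max) lrm_at_extend_last. Qed.

End ExtendStopping.

Lemma max_lrm_at n (p : 'S_n) j : val (p j) = n.-1 -> lrm_at p j.
Proof.
move=> Ej; apply/forallP => i; apply/implyP => lt_ij.
have ne : val (p i) != val (p j) by rewrite val_eqE (inj_eq perm_inj) -val_eqE neq_ltn lt_ij.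
have lt_pi : val (p i) < n := ltn_ord (p i).
by change (val (p i) < val (p j)); move: ne; rewrite Ej; lia.
Qed.

Lemma find_iota (P : pred nat) n j : j <= n -> (forall i, i < j -> ~~ P i) ->
  (j < n -> P j) -> find P (iota 0 n) = j.
Proof.
move=> le_jn before_j at_j; have := find_size P (iota 0 n); rewrite size_iota => le_fn.
case: (ltngtP (find P (iota 0 n)) j) => // [lt|gt].
  have hasP : has P (iota 0 n) by rewrite has_find size_iota (leq_trans lt le_jn).
  have := nth_find 0 hasP; rewrite nth_iota ?add0n ?(leq_trans lt le_jn) //.
  by move/negP: (before_j _ lt).
have lt_jn : j < n by apply: leq_trans gt le_fn.
by have := before_find 0 gt; rewrite nth_iota // add0n at_j.
Qed.

Lemma wins_positional n (p : 'S_n) k : k <= n.-1 -> wins (positional k) p = kwinnable p k.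
Proof.
move=> le_kn; rewrite /wins /kwinnable /stop_time.
set t := find _ _.
have le_tn : t <= n.-1.
  by have := find_size (fun i => positional k (relpat p i)) (iota 0 n.-1); rewrite size_iota.
apply/existsP/existsP => [[j /andP[/eqP Ej Pj]]|[j /and4P[kj lj Pj /forallP before_j]]].
  have accepts_j : j < n.-1 -> (k <= j).
    move=> lt_jn; have hasP : has (fun i => positional k (relpat p i)) (iota 0 n.-1).
      by rewrite has_find size_iota -/t -Ej.
    have := nth_find 0 hasP; rewrite -/t nth_iota -?Ej // add0n.
    by rewrite (positional_relpat k p j) => /andP[].
  exists j; rewrite (max_lrm_at (eqP Pj)) Pj /=.
  apply/andP; split; first by case: (ltnP j n.-1) => [/accepts_j //|/(leq_trans le_kn)].
  apply/forallP => i; apply/implyP => /andP[ki lt_ij].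
  have lt_it : i < t by rewrite -Ej.
  have := before_find 0 lt_it; rewrite nth_iota ?(leq_trans lt_it) // add0n.
  by rewrite positional_relpat ki /= => ->.
exists j; rewrite Pj andbT eq_sym; apply/eqP; apply: find_iota.
- by rewrite -ltnS (ltn_predK (ltn_ord j)); exact: ltn_ord.
- move=> i lt_ij; have lt_in : i < n by apply: ltn_trans lt_ij (ltn_ord j).
  rewrite (positional_relpat k p (Ordinal lt_in)) /=.
  by case: (leqP k i) => //= ki; have := implyP (before_j (Ordinal lt_in)); rewrite /= ki lt_ij; apply.
- by rewrite (positional_relpat k p j) kj lj.
Qed.

Section Rewards.
Local Open Scope ring_scope.
Variables (R : realFieldType) (theta : R).

Definition payoff n (s : strategy) (p : 'S_n) (a b : R) : R :=
  if (accept_time s p < n)%N then (if max_at p (accept_time s p) then a else 0)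
  else b.

Definition reward n (s : strategy) (a b : R) : R :=
  \sum_(p : 'S_n) theta ^+ lrm p * payoff s p a b.

(* Upper bound for [reward] obtained by choosing the better of the two
   continuations at every step (backward induction). *)
Fixpoint bellman n (a b : R) : R :=
  if n is n'.+1 then bellman n' (n'%:R * a) (theta * Num.max a b + n'%:R * b)
  else b.

Fixpoint positional_value (k n : nat) (a b : R) : R :=
  if n is n'.+1 then
    positional_value k n' (n'%:R * a) (theta * (if (k <= n')%N then a else b) + n'%:R * b)
  else b.

Lemma bellmanS n a b :
  bellman n.+1 a b = bellman n (n%:R * a) (theta * Num.max a b + n%:R * b).
Proof. by []. Qed.

Lemma positional_valueS k n a b : positional_value k n.+1 a b =
  positional_value k n (n%:R * a) (theta * (if (k <= n)%N then a else b) + n%:R * b).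
Proof. by []. Qed.

Lemma reward0 s a b : reward 0 s a b = b.
Proof.
rewrite /reward (eq_bigr (fun _ => b)) ?sumr_const ?card_Sn ?mulr1n // => p _.
have -> : lrm p = 0%N by apply/eqP; rewrite -leqn0 (leq_trans (max_card _)) ?card_ord.
by rewrite expr0 mul1r /payoff /accept_time.
Qed.

Lemma sum_last_weight m (f : 'I_m.+1 -> R) :
  \sum_(v : 'I_m.+1) theta ^+ (v == ord_max) * f v =
  \sum_(j < m) f (lift ord_max j) + theta * f ord_max.
Proof.
rewrite big_ord_recr /= eqxx expr1; congr (_ + _); apply: eq_bigr => j _.
have -> : widen_ord (leqnSn m) j = lift ord_max j by apply/val_inj/esym/lift_max.
by rewrite eq_sym (negbTE (neq_lift _ _)) expr0 mul1r.
Qed.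

(* If s has stopped at time t < m on q, it stops on the maximum of
   [extend (q, v)] for exactly the m values v that are not the largest. *)
Lemma sum_max_at_extend m (q : 'S_m) t a : (t < m)%N ->
  \sum_(v : 'I_m.+1) theta ^+ (v == ord_max) *
     (if max_at (extend (q, v)) t then a else 0) =
  if max_at q t then m%:R * a else 0.
Proof.
move=> lt_tm; under eq_bigr do rewrite max_at_extend //.
rewrite sum_last_weight eqxx andbF mulr0 addr0.
under eq_bigr do rewrite eq_sym (negbTE (neq_lift _ _)) andbT.
by case: (max_at q t); rewrite sumr_const card_ord ?mul0rn // mulr_natl.
Qed.

(* Last decision of an arbitrary rule d: the best it can do is the better of
   stopping and continuing on the largest value. *)
Lemma last_step_le m (d : 'I_m.+1 -> bool) a b :
  0 <= theta -> 0 <= a -> 0 <= b ->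
  \sum_(v : 'I_m.+1) theta ^+ (v == ord_max) *
     (if d v then (if v == ord_max then a else 0) else b)
  <= theta * Num.max a b + m%:R * b.
Proof.
move=> theta_ge0 a_ge0 b_ge0; rewrite sum_last_weight eqxx addrC.
apply: lerD; first by apply: ler_wpM2l => //; case: (d _); rewrite le_max lexx ?orbT.
apply: le_trans (_ : \sum_(j < m) b <= _).
  by apply: ler_sum => j _; rewrite eq_sym (negbTE (neq_lift _ _)); case: (d _).
by rewrite sumr_const card_ord mulr_natl.
Qed.

Lemma last_step_threshold m (c : bool) a b :
  \sum_(v : 'I_m.+1) theta ^+ (v == ord_max) *
     (if c && (v == ord_max) then (if v == ord_max then a else 0) else b)
  = theta * (if c then a else b) + m%:R * b.
Proof.
rewrite sum_last_weight eqxx andbT addrC; congr (_ + _).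
under eq_bigr do rewrite eq_sym (negbTE (neq_lift _ _)) andbF.
by rewrite sumr_const card_ord mulr_natl.
Qed.

Lemma reward_extend m s a b : reward m.+1 s a b =
  \sum_(q : 'S_m) theta ^+ lrm q *
    (if (accept_time s q < m)%N then
       (if max_at q (accept_time s q) then m%:R * a else 0)
     else \sum_(v : 'I_m.+1) theta ^+ (v == ord_max) *
            (if s (relpat (extend (q, v)) m) then (if v == ord_max then a else 0) else b)).
Proof.
rewrite /reward sum_extend; apply: eq_bigr => q _.
under eq_bigr do rewrite lrm_extend exprD -mulrA.
rewrite -mulr_sumr /payoff; congr (_ * _); case: ltnP => lt_tm.
  under eq_bigr do rewrite accept_time_extend lt_tm ltnS (ltnW lt_tm).
  exact: sum_max_at_extend.
have Et : accept_time s q = m by apply/eqP; rewrite eqn_leq lt_tm accept_time_le.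
apply: eq_bigr => v _; rewrite accept_time_extend Et ltnn.
by case: (s _); rewrite ?ltnSn ?max_at_extend_last ?ltnn.
Qed.

Lemma reward_step_le m s a b : 0 <= theta -> 0 <= a -> 0 <= b ->
  reward m.+1 s a b <= reward m s (m%:R * a) (theta * Num.max a b + m%:R * b).
Proof.
move=> theta_ge0 a_ge0 b_ge0; rewrite reward_extend; apply: ler_sum => q _.
apply: ler_wpM2l; first exact: exprn_ge0.
rewrite /payoff; case: ltnP => // _; exact: last_step_le.
Qed.

Lemma reward_step_positional m k a b :
  reward m.+1 (positional k) a b =
  reward m (positional k) (m%:R * a) (theta * (if (k <= m)%N then a else b) + m%:R * b).
Proof.
rewrite reward_extend; apply: eq_bigr => q _; rewrite /payoff; case: ltnP => // _.
by under eq_bigr do rewrite positional_extend_last; rewrite last_step_threshold.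
Qed.

Lemma reward_le_bellman n s a b : 0 <= theta -> 0 <= a -> 0 <= b ->
  reward n s a b <= bellman n a b.
Proof.
move=> theta_ge0; elim: n a b => [|n IH] a b a_ge0 b_ge0; first by rewrite reward0.
rewrite bellmanS; apply: le_trans (@reward_step_le n s a b theta_ge0 a_ge0 b_ge0) _.
apply: IH.
  exact: mulr_ge0.
by rewrite addr_ge0 ?mulr_ge0 // le_max a_ge0.
Qed.

Lemma reward_positional n k a b : reward n (positional k) a b = positional_value k n a b.
Proof.
by elim: n a b => [|n IH] a b; rewrite ?reward0 // reward_step_positional IH positional_valueS.
Qed.

Lemma win_weight_reward m s :
  \sum_(p : 'S_m.+1 | wins s p) theta ^+ lrm p = reward m s m%:R theta.
Proof.
rewrite big_mkcond /= /reward sum_extend; apply: eq_bigr => q _.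
have Ew v : (if wins s (extend (q, v)) then theta ^+ lrm (extend (q, v)) else 0) =
  theta ^+ lrm q * (theta ^+ (v == ord_max) *
    (if max_at (extend (q, v)) (accept_time s q) then 1 else 0)).
  rewrite wins_max_at stop_time_extend lrm_extend exprD.
  by case: (max_at _ _); rewrite ?mulr1 ?mulr0.
under eq_bigr do rewrite Ew.
rewrite -mulr_sumr /payoff; congr (_ * _); case: ltnP => lt_tm.
  by rewrite sum_max_at_extend // mulr1.
have Et : accept_time s q = m by apply/eqP; rewrite eqn_leq lt_tm accept_time_le.
rewrite Et; under eq_bigr do rewrite max_at_extend_last.
rewrite sum_last_weight eqxx mulr1 big1 ?add0r // => j _.
by rewrite eq_sym (negbTE (neq_lift _ _)).
Qed.

End Rewards.

Section Threshold.
Local Open Scope ring_scope.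
Variables (R : realFieldType) (N : nat).
Hypothesis N_ge2 : (2 <= N)%N.
Local Notation h := (H N R).

Lemma le_inv_mul (x y : R) : 0 < y -> (x <= y^-1) = (x * y <= 1).
Proof. by move=> y_gt0; rewrite -div1r ler_pdivlMr. Qed.

Lemma lt_inv_mul (x y : R) : 0 < y -> (y^-1 < x) = (1 < x * y).
Proof. by move=> y_gt0; rewrite -div1r ltr_pdivrMr. Qed.

Lemma H_ge0 j : 0 <= h j.
Proof. by apply: sumr_ge0 => i _; rewrite invr_ge0 ler0n. Qed.

Lemma H_mono j j' : (j <= j')%N -> h j' <= h j.
Proof.
move=> le_jj'; case: (leqP j'.+1 N) => [le_j'N|lt_Nj'].
  rewrite /H [X in _ <= X](big_cat_nat (n := j'.+1)) //= lerDr.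
  by apply: sumr_ge0 => i _; rewrite invr_ge0 ler0n.
by rewrite /H (@big_geq _ _ _ j'.+1 N) ?H_ge0 // ltnW.
Qed.

Lemma H_pred j : (0 < j < N)%N -> h j.-1 = j%:R^-1 + h j.
Proof. by case/andP=> j_gt0 lt_jN; rewrite /H prednK // big_ltn. Qed.

Lemma H_last : h (N - 2) = (N.-1)%:R^-1.
Proof.
rewrite /H (_ : (N - 2).+1 = N.-1); last by lia.
by rewrite -{2}(ltn_predK N_ge2) big_nat1.
Qed.

Lemma H_pos j : (j <= N - 2)%N -> 0 < h j.
Proof.
move=> le_jN; apply: lt_le_trans (H_mono le_jN); rewrite H_last invr_gt0 ltr0n.
by rewrite -ltnS (ltn_predK N_ge2).
Qed.

Lemma H_end : h N.-1 = 0.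
Proof. by rewrite /H big_geq // (ltn_predK N_ge2). Qed.

(* In the middle regime of kappa, the least k with theta * h k <= 1
   witnesses the defining condition. *)
Lemma kappa_middle_exists (theta : R) :
  ~~ (theta <= (h 0)^-1) -> ~~ ((N.-1)%:R < theta) ->
  exists k : 'I_N,
    (1 <= k <= N - 2)%N && ((h k.-1)^-1 < theta) && (theta <= (h k)^-1).
Proof.
move=> not_low not_high.
have exP : exists j, theta * h j <= 1 by exists N.-1; rewrite H_end mulr0 ler01.
have [k Pk min_k] := find_ex_minn exP.
have lt_kN : (k < N)%N.
  by rewrite -(ltn_predK N_ge2) ltnS min_k // H_end mulr0 ler01.
have k_gt0 : (0 < k)%N.
  by rewrite lt0n; apply: contraNneq not_low => k0; rewrite le_inv_mul ?H_pos // -k0.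
have le_kN : (k <= N - 2)%N.
  rewrite leqNgt; apply: contraNN not_high => lt_Nk.
  have Ek : k.-1 = (N - 2)%N by lia.
  have := contraNN (min_k k.-1); rewrite -ltnNge ltn_predL k_gt0 -ltNge => /(_ isT).
  by rewrite Ek H_last -lt_inv_mul ?invrK // invr_gt0 ltr0n -ltnS (ltn_predK N_ge2).
exists (Ordinal lt_kN); rewrite /= k_gt0 le_kN le_inv_mul ?H_pos //= Pk andbT.
have := contraNN (min_k k.-1); rewrite -ltnNge ltn_predL k_gt0 -ltNge => /(_ isT).
by rewrite lt_inv_mul // H_pos //; lia.
Qed.

(* What the proof uses of kappa: it is at most N-1, theta * h kappa <= 1,
   and theta * h (kappa-1) > 1 unless kappa = 0. *)
Lemma kappa_spec (theta : R) : 0 < theta ->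
  [/\ (kappa N theta <= N.-1)%N, theta * h (kappa N theta) <= 1 &
      (0 < kappa N theta)%N -> 1 < theta * h (kappa N theta).-1].
Proof.
move=> theta_gt0; rewrite /kappa; case: ifP => [low|/negbT not_low].
  by rewrite -le_inv_mul ?H_pos.
case: ifP => [high|/negbT not_high].
  split=> //; first by rewrite H_end mulr0 ler01.
  rewrite (_ : N.-1.-1 = N - 2)%N; last by lia.
  by rewrite H_last -lt_inv_mul ?invrK // invr_gt0 ltr0n -ltnS (ltn_predK N_ge2).
pose P (k : 'I_N) := (1 <= k <= N - 2)%N && ((h k.-1)^-1 < theta) && (theta <= (h k)^-1).
have [k0 Pk0] := kappa_middle_exists not_low not_high.
have card_P : (0 < #|P|)%N by apply/card_gt0P; exists k0.
have [k Pk ->] := @eq_bigmax_cond _ P (@nat_of_ord N) card_P.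
case/andP: Pk => /andP[/andP[k_gt0 le_kN] low] high.
split; first by rewrite -ltnS (ltn_predK N_ge2).
  by rewrite -le_inv_mul ?H_pos.
by rewrite -lt_inv_mul ?H_pos //; lia.
Qed.

Lemma kappa_mono (theta1 theta2 : R) : 0 < theta1 -> theta1 <= theta2 ->
  (kappa N theta1 <= kappa N theta2)%N.
Proof.
move=> theta1_gt0 le_theta; have theta2_gt0 := lt_le_trans theta1_gt0 le_theta.
have [_ _ above1] := kappa_spec theta1_gt0.
have [_ below2 _] := kappa_spec theta2_gt0.
rewrite leqNgt; apply/negP => lt21.
have gt1 := above1 (leq_ltn_trans (leq0n _) lt21).
have le_h : h (kappa N theta1).-1 <= h (kappa N theta2) by apply: H_mono; lia.
have le1 : theta1 * h (kappa N theta1).-1 <= 1.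
  apply: le_trans (ler_wpM2l (ltW theta1_gt0) le_h) (le_trans _ below2).
  by apply: ler_wpM2r => //; exact: H_ge0.
by have := lt_le_trans gt1 le1; rewrite ltxx.
Qed.

End Threshold.

Section BellmanThreshold.
Local Open Scope ring_scope.
Variables (R : realFieldType) (theta : R).
Hypothesis theta_ge0 : 0 <= theta.

(* While continuing is at least as good as stopping (a <= b) and the
   threshold k is not reached, the bound is attained by waiting. *)
Lemma bellman_wait n k a b : (n <= k)%N -> 0 <= a -> a <= b ->
  bellman theta n a b = positional_value theta k n a b.
Proof.
elim: n a b => [|n IH] a b // le_nk a_ge0 le_ab.
rewrite bellmanS positional_valueS leqNgt le_nk max_r //.
apply: IH; [exact: ltnW | exact: mulr_ge0 |].
rewrite -[X in X <= _]add0r lerD ?mulr_ge0 ?(le_trans a_ge0 le_ab) //.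
by apply: ler_wpM2l => //; exact: ler0n.
Qed.

Variables (N K : nat).
Local Notation h := (H N R).
Hypothesis K_stop : theta * h K <= 1.
Hypothesis K_wait : (0 < K)%N -> 1 < theta * h K.-1.

(* Past the threshold, stopping on the maximum (payoff a) beats the
   continuation value theta * h j * a. *)
Lemma threshold_stop j a : (K <= j)%N -> 0 <= a -> theta * h j * a <= a.
Proof.
move=> le_Kj a_ge0; rewrite ler_piMl // (le_trans _ K_stop) //.
by apply: ler_wpM2l => //; exact: H_mono.
Qed.

Lemma threshold_wait j a : K = j.+1 -> 0 <= a ->
  bellman theta j.+1 a (theta * h j * a) =
  positional_value theta K j.+1 a (theta * h j * a).
Proof.
move=> EK a_ge0; apply: bellman_wait => //; first by rewrite EK.
by rewrite ler_peMl // (_ : j = K.-1) ?ltW ?K_wait // EK.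
Qed.

(* Backward induction from step j+1, when continuing from there is worth
   theta * h j times the value a of stopping on the maximum. *)
Lemma bellman_threshold j a : 0 <= a -> (K <= j.+1)%N -> (j < N)%N ->
  bellman theta j.+1 a (theta * h j * a) =
  positional_value theta K j.+1 a (theta * h j * a).
Proof.
elim: j a => [|j IH] a a_ge0 le_Kj lt_jN.
  case: (leqP K 0) => [K0|K_gt0]; last by apply: threshold_wait => //; lia.
  by rewrite bellmanS positional_valueS K0 max_l // threshold_stop.
case: (leqP K j.+1) => [le_K|lt_K]; last by apply: threshold_wait => //; lia.
rewrite bellmanS positional_valueS le_K max_l ?threshold_stop //.
have -> : theta * a + j.+1%:R * (theta * h j.+1 * a) = theta * h j * (j.+1%:R * a).
  by rewrite (@H_pred R N j.+1) ?lt_jN //; field; rewrite nat1r pnatr_eq0.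
by apply: IH; [exact: mulr_ge0 | | exact: ltnW].
Qed.

End BellmanThreshold.

Local Open Scope ring_scope.

(* At the threshold kappa the backward-induction bound is attained by the
   positional strategy, hence no strategy wins with larger weight. *)
Lemma positional_kappa_optimal (R : realFieldType) N (theta : R) (s : strategy) :
  (2 <= N)%N -> 0 < theta ->
  \sum_(p : 'S_N | wins s p) theta ^+ lrm p
  <= \sum_(p : 'S_N | wins (positional (kappa N theta)) p) theta ^+ lrm p.
Proof.
case: N => [//|m] N_ge2 theta_gt0; have theta_ge0 := ltW theta_gt0.
have [le_Km stop_K wait_K] := kappa_spec N_ge2 theta_gt0.
have Etheta : theta = theta * H m.+1 R m.-1 * m%:R.
  have -> : m.-1 = (m.+1 - 2)%N by rewrite subSS subn1.
  by rewrite (H_last R N_ge2) -mulrA mulVf ?mulr1 // pnatr_eq0 -lt0n.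
have le_Km' : (kappa m.+1 theta <= m.-1.+1)%N by rewrite prednK.
have lt_m : (m.-1 < m.+1)%N by rewrite ltnS leq_pred.
have := bellman_threshold theta_ge0 stop_K wait_K (ler0n R m) le_Km' lt_m.
rewrite prednK // -Etheta => bellman_K.
by rewrite !win_weight_reward reward_positional -bellman_K reward_le_bellman.
Qed.

Theorem corollary4p6 (R : realFieldType) (N : nat) (hN : (2 <= N)%N) :
  (forall theta : R, 0 < theta ->
     (forall k : nat, (k <= N.-1)%N -> W N theta k <= W N theta (kappa N theta))
     /\ (forall s : strategy, winprob N theta s
                              <= winprob N theta (positional (kappa N theta))))
  /\ (forall theta1 theta2 : R, 0 < theta1 -> theta1 <= theta2 ->
        (kappa N theta1 <= kappa N theta2)%N).
Proof.
split; last by move=> theta1 theta2; exact: kappa_mono.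
move=> theta theta_gt0; have [le_KN _ _] := kappa_spec hN theta_gt0.
have W_wins k : (k <= N.-1)%N ->
    W N theta k = \sum_(p : 'S_N | wins (positional k) p) theta ^+ lrm p.
  by move=> le_kN; apply: eq_bigl => p; rewrite wins_positional.
split=> [k le_kN|s].
  by rewrite W_wins // W_wins // positional_kappa_optimal.
rewrite /winprob ler_wpM2r ?positional_kappa_optimal // invr_ge0.
by apply: sumr_ge0 => p _; rewrite exprn_ge0 // ltW.
Qed.
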